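(* Let $0\to M\to P_r\to\cdots\to P_1\to P_0\to N\to0$ and $0\to M\to Q_r\to\cdots\to Q_1\to Q_0\to N\to0$ be exact sequences in an abelian category which represent the same class in $\mathrm{Ext}^{r+1}(N,M)$. If all $P_i$ and $Q_i$ are projective, then \[\bigoplus_{i\ge0}(P_{2i}\oplus Q_{2i+1})\cong\bigoplus_{i\ge0}(P_{2i+1}\oplus Q_{2i}),\] where $P_i=Q_i=0$ for $i>r$. *)

From HB Require Import structures.
From mathcomp Require Import all_boot all_order all_algebra.
From Stdlib Require Import Relations.
Set Implicit Arguments. Unset Strict Implicit. Unset Printing Implicit Defensive.
Import GRing.Theory.
Local Open Scope ring_scope.

Record precat := Cat {
  Obj :> Type;
  Hom : Obj -> Obj -> zmodType;
  idm : forall A, Hom A A;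
  comp : forall A B C, Hom B C -> Hom A B -> Hom A C;
  compA : forall A B C D (h : Hom C D) (g : Hom B C) (f : Hom A B),
      comp h (comp g f) = comp (comp h g) f;
  comp1m : forall A B (f : Hom A B), comp (idm B) f = f;
  compm1 : forall A B (f : Hom A B), comp f (idm A) = f;
  compDl : forall A B C (g g' : Hom B C) (f : Hom A B),
      comp (g + g') f = comp g f + comp g' f;
  compDr : forall A B C (g : Hom B C) (f f' : Hom A B),
      comp g (f + f') = comp g f + comp g f'
}.
Arguments Hom {p} A B.
Arguments idm {p} A.
Arguments comp {p A B C} g f.

Section Cat.
Variable C : precat.

Definition is_zero_obj (Z : C) : Prop := idm Z = 0.

Definition mono (A B : C) (m : Hom A B) : Prop :=
  forall X (g h : Hom X A), comp m g = comp m h -> g = h.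
Definition epi (A B : C) (e : Hom A B) : Prop :=
  forall X (g h : Hom B X), comp g e = comp h e -> g = h.

Definition is_iso (A B : C) : Prop :=
  exists (f : Hom A B) (g : Hom B A), comp g f = idm A /\ comp f g = idm B.

Definition is_kernel (A B : C) (f : Hom A B) (K : C) (k : Hom K A) : Prop :=
  comp f k = 0 /\
  forall X (g : Hom X A), comp f g = 0 -> exists! h : Hom X K, comp k h = g.
Definition is_cokernel (A B : C) (f : Hom A B) (D : C) (c : Hom B D) : Prop :=
  comp c f = 0 /\
  forall X (g : Hom B X), comp g f = 0 -> exists! h : Hom D X, comp h c = g.

Definition is_biprod (A B S : C) (i1 : Hom A S) (i2 : Hom B S)
    (p1 : Hom S A) (p2 : Hom S B) : Prop :=
  [/\ comp p1 i1 = idm A, comp p2 i2 = idm B, comp p1 i2 = 0, comp p2 i1 = 0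
    & comp i1 p1 + comp i2 p2 = idm S].

Definition abelian : Prop :=
  (exists Z : C, is_zero_obj Z) /\
  [/\ (forall A B : C, exists S i1 i2 p1 p2, @is_biprod A B S i1 i2 p1 p2),
      (forall (A B : C) (f : Hom A B), exists K (k : Hom K A), is_kernel f k),
      (forall (A B : C) (f : Hom A B), exists D (c : Hom B D), is_cokernel f c),
      (forall (A B : C) (m : Hom A B), mono m ->
         exists D (g : Hom B D), is_kernel g m)
    & (forall (A B : C) (e : Hom A B), epi e ->
         exists K (g : Hom K A), is_cokernel g e)].

(* exactness of A --f--> B --g--> C0 at B: gf = 0 and ker g <= im f,
   i.e. the kernel of g composed with the cokernel of f vanishes. *)
Definition exact_at (A B C0 : C) (f : Hom A B) (g : Hom B C0) : Prop :=
  comp g f = 0 /\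
  forall K (k : Hom K B) D (c : Hom B D),
    is_kernel g k -> is_cokernel f c -> comp c k = 0.

Definition projective (P : C) : Prop :=
  forall (A B : C) (e : Hom A B), epi e ->
    forall f : Hom P B, exists g : Hom P A, comp e g = f.

Fixpoint is_biprod_seq (L : seq C) (S : C) : Prop :=
  match L with
  | [::] => is_zero_obj S
  | X :: L' => exists T, is_biprod_seq L' T /\
                 exists i1 i2 p1 p2, @is_biprod X T S i1 i2 p1 p2
  end.

(* A (candidate) extension 0 -> M -> P_r -> ... -> P_0 -> N -> 0
   (only the P_i with i <= r, and d_i : P_{i+1} -> P_i with i < r, matter). *)
Record ext (N M : C) (r : nat) := Ext {
  eobj : nat -> C;
  ediff : forall i, Hom (eobj i.+1) (eobj i);
  eaug : Hom (eobj 0) N;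
  eincl : Hom M (eobj r)
}.

Definition exact_ext (N M : C) (r : nat) (E : ext N M r) : Prop :=
  [/\ epi (eaug E),
      (match r return Hom M (eobj E r) -> Prop with
       | 0 => fun i => mono i /\ exact_at i (eaug E)
       | s.+1 => fun i => mono i /\ exact_at i (ediff E s)
       end) (eincl E),
      (0 < r)%N -> exact_at (ediff E 0) (eaug E)
    & forall i, (i.+1 < r)%N -> exact_at (ediff E i.+1) (ediff E i)].

Definition ext_mor (N M : C) (r : nat) (E F : ext N M r) : Prop :=
  exists phi : forall i, Hom (eobj E i) (eobj F i),
    [/\ comp (eaug F) (phi 0%N) = eaug E,
        comp (phi r) (eincl E) = eincl F
      & forall i, (i < r)%N ->
          comp (phi i) (ediff E i) = comp (ediff F i) (phi i.+1)].

Definition ext_step (N M : C) (r : nat) (E F : ext N M r) : Prop :=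
  [/\ exact_ext E, exact_ext F & ext_mor E F].

(* Yoneda equivalence: same class in Ext^{r+1}(N, M) *)
Definition yoneda_equiv (N M : C) (r : nat) : ext N M r -> ext N M r -> Prop :=
  Relation_Operators.clos_refl_sym_trans _ (@ext_step N M r).

End Cat.

(* Since the P_i are projective, the identity of N lifts to a chain map E -> F, and
   the map it induces on M is the identity up to maps factoring through M -> P_r:
   this property of the pair (E, F) holds for (E, E) by the usual null-homotopy
   argument and is transported along morphisms of extensions, hence along Yoneda
   equivalence.  Correcting the top component then gives a morphism of extensions
   E -> F, whose mapping cone
     0 -> P_r -> P_(r-1) (+) Q_r -> ... -> P_0 (+) Q_1 -> Q_0 -> 0
   is an exact complex of projectives.  Such a complex splits off its terms one at a
   time from the bottom, so its even and odd terms have isomorphic direct sums. *)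

From mathcomp Require Import all_boot all_order all_algebra.
From Stdlib Require Import ClassicalEpsilon Permutation.
Set Implicit Arguments. Unset Strict Implicit. Unset Printing Implicit Defensive.
Import GRing.Theory.
Local Open Scope ring_scope.

Arguments compA {p A B C D} h g f.

Section Preadditive.
Variable C : precat.

Lemma comp0m (A B D : C) (f : Hom A B) : comp (0 : Hom B D) f = 0.
Proof. by apply: (addrI (comp (0 : Hom B D) f)); rewrite -compDl !addr0. Qed.

Lemma compm0 (A B D : C) (g : Hom B D) : comp g (0 : Hom A B) = 0.
Proof. by apply: (addrI (comp g (0 : Hom A B))); rewrite -compDr !addr0. Qed.

Lemma compNm (A B D : C) (g : Hom B D) (f : Hom A B) : comp (- g) f = - comp g f.
Proof. by apply: (addrI (comp g f)); rewrite -compDl !subrr comp0m. Qed.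

Lemma compmN (A B D : C) (g : Hom B D) (f : Hom A B) : comp g (- f) = - comp g f.
Proof. by apply: (addrI (comp g f)); rewrite -compDr !subrr compm0. Qed.

Lemma compBm (A B D : C) (g g' : Hom B D) (f : Hom A B) :
  comp (g - g') f = comp g f - comp g' f.
Proof. by rewrite compDl compNm. Qed.

Lemma compmB (A B D : C) (g : Hom B D) (f f' : Hom A B) :
  comp g (f - f') = comp g f - comp g f'.
Proof. by rewrite compDr compmN. Qed.

Lemma iso_refl (A : C) : is_iso A A.
Proof. by exists (idm A), (idm A); rewrite comp1m. Qed.

Lemma iso_sym (A B : C) : is_iso A B -> is_iso B A.
Proof. by move=> [f [g [gf fg]]]; exists g, f. Qed.

Lemma iso_trans (A B D : C) : is_iso A B -> is_iso B D -> is_iso A D.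
Proof.
move=> [f [g [gf fg]]] [f' [g' [gf' fg']]]; exists (comp f' f), (comp g g').
split; first by rewrite -compA (compA g') gf' comp1m gf.
by rewrite -compA (compA f) fg comp1m fg'.
Qed.

Lemma zero_iso (Z Z' : C) : is_zero_obj Z -> is_zero_obj Z' -> is_iso Z Z'.
Proof. by move=> hZ hZ'; exists 0, 0; rewrite hZ hZ' !comp0m. Qed.

Lemma kernel_mono (A B K : C) (f : Hom A B) (k : Hom K A) : is_kernel f k -> mono k.
Proof.
move=> [fk0 kP] X g h kg_kh.
have [|u [_ uP]] := kP X (comp k g); first by rewrite compA fk0 comp0m.
by rewrite -(uP g erefl) (uP h (esym kg_kh)).
Qed.

Lemma mono_comp (A B D : C) (g : Hom B D) (f : Hom A B) :
  mono g -> mono f -> mono (comp g f).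
Proof. by move=> mono_g mono_f X x y; rewrite -!compA => /mono_g /mono_f. Qed.

Lemma retract_projective (A B : C) (i : Hom A B) (p : Hom B A) :
  comp p i = idm A -> projective B -> projective A.
Proof.
move=> pi projB X Y e epi_e f.
have [g eg] := projB _ _ _ epi_e (comp f p).
by exists (comp g i); rewrite compA eg -compA pi compm1.
Qed.

Section Biproduct.
Variables (A B S : C) (i1 : Hom A S) (i2 : Hom B S) (p1 : Hom S A) (p2 : Hom S B).
Hypothesis bpS : is_biprod i1 i2 p1 p2.

Lemma biprod_pr1 (X : C) (a : Hom X A) (b : Hom X B) : comp p1 (comp i1 a + comp i2 b) = a.
Proof. by case: bpS => e11 _ e12 _ _; rewrite compDr !compA e11 e12 comp1m comp0m addr0. Qed.

Lemma biprod_pr2 (X : C) (a : Hom X A) (b : Hom X B) : comp p2 (comp i1 a + comp i2 b) = b.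
Proof. by case: bpS => _ e22 _ e21 _; rewrite compDr !compA e22 e21 comp1m comp0m add0r. Qed.

Lemma biprod_hom_eq (X : C) (x y : Hom X S) :
  comp p1 x = comp p1 y -> comp p2 x = comp p2 y -> x = y.
Proof.
case: bpS => _ _ _ _ eS e1 e2.
by rewrite -[x]comp1m -[y]comp1m -eS !compDl -!compA e1 e2.
Qed.

Lemma biprod_projective : projective A -> projective B -> projective S.
Proof.
case: bpS => _ _ _ _ eS projA projB X Y e epi_e g.
have [a ea] := projA _ _ _ epi_e (comp g i1).
have [b eb] := projB _ _ _ epi_e (comp g i2).
exists (comp a p1 + comp b p2).
by rewrite compDr !compA ea eb -!compA -compDr eS compm1.
Qed.

End Biproduct.

Lemma biprod_iso (A B S A' B' S' : C) (i1 : Hom A S) (i2 : Hom B S) p1 p2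
    (j1 : Hom A' S') (j2 : Hom B' S') q1 q2 :
  is_biprod i1 i2 p1 p2 -> is_biprod j1 j2 q1 q2 ->
  is_iso A A' -> is_iso B B' -> is_iso S S'.
Proof.
move=> bpS bpS' [f [f' [f'f ff']]] [g [g' [g'g gg']]].
have [_ _ _ _ eS] := bpS; have [_ _ _ _ eS'] := bpS'.
exists (comp j1 (comp f p1) + comp j2 (comp g p2)),
       (comp i1 (comp f' q1) + comp i2 (comp g' q2)).
split.
  rewrite compDl -!compA (biprod_pr1 bpS') (biprod_pr2 bpS').
  by rewrite (compA f') (compA g') f'f g'g !comp1m.
rewrite compDl -!compA (biprod_pr1 bpS) (biprod_pr2 bpS).
by rewrite (compA f) (compA g) ff' gg' !comp1m.
Qed.

Lemma biprod_swap (A B S : C) (i1 : Hom A S) (i2 : Hom B S) p1 p2 :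
  is_biprod i1 i2 p1 p2 -> is_biprod i2 i1 p2 p1.
Proof. by move=> [? ? ? ? eS]; split=> //; rewrite addrC. Qed.

Lemma biprod_zero (A Z : C) : is_zero_obj Z -> is_biprod (idm A) (0 : Hom Z A) (idm A) 0.
Proof. by move=> hZ; split; rewrite ?comp1m ?comp0m ?compm0 ?hZ // addr0. Qed.

Lemma biprod_assoc (A B D S T U : C)
    (i1 : Hom A S) (i2 : Hom T S) (p1 : Hom S A) (p2 : Hom S T)
    (j1 : Hom B T) (j2 : Hom D T) (q1 : Hom T B) (q2 : Hom T D)
    (k1 : Hom A U) (k2 : Hom B U) (r1 : Hom U A) (r2 : Hom U B) :
  is_biprod i1 i2 p1 p2 -> is_biprod j1 j2 q1 q2 -> is_biprod k1 k2 r1 r2 ->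
  is_biprod (comp i1 r1 + comp i2 (comp j1 r2)) (comp i2 j2)
            (comp k1 p1 + comp k2 (comp q1 p2)) (comp q2 p2).
Proof.
move=> bpS bpT bpU; have [p1i1 p2i2 p1i2 p2i1 eS] := bpS.
have [q1j1 q2j2 q1j2 q2j1 eT] := bpT; have [_ _ _ _ eU] := bpU.
have in2E : comp i2 j2 = comp i1 0 + comp i2 j2 by rewrite compm0 add0r.
split.
- rewrite compDl -!compA (biprod_pr1 bpS) (biprod_pr2 bpS).
  by rewrite (compA q1 j1) q1j1 comp1m.
- by rewrite -compA (compA p2 i2) p2i2 comp1m.
- rewrite in2E compDl -!compA (biprod_pr1 bpS) (biprod_pr2 bpS).
  by rewrite q1j2 !compm0 addr0.
- by rewrite -compA (biprod_pr2 bpS) (compA q2 j1) q2j1 comp0m.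
set X := comp i1 r1 + _; set Y := comp k1 p1 + _.
have p1X : comp p1 X = r1 := biprod_pr1 bpS _ _.
have p2X : comp p2 X = comp j1 r2 := biprod_pr2 bpS _ _.
have r1Y : comp r1 Y = p1 := biprod_pr1 bpU _ _.
have r2Y : comp r2 Y = comp q1 p2 := biprod_pr2 bpU _ _.
apply: (biprod_hom_eq bpS); rewrite compDr compm1 compA.
  by rewrite p1X r1Y !compA p1i2 !comp0m addr0.
rewrite p2X -compA r2Y (compA p2 (comp i2 j2)) (compA p2 i2) p2i2 comp1m.
by rewrite !compA -compDl eT comp1m.
Qed.

End Preadditive.

Section ChosenBiproducts.
Variables (C : precat) (HC : abelian C).

Record biprod_data (A B : C) := BiprodData {
  bp_obj : C;
  bp_in1 : Hom A bp_obj;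
  bp_in2 : Hom B bp_obj;
  bp_pr1 : Hom bp_obj A;
  bp_pr2 : Hom bp_obj B;
  bp_biprod : is_biprod bp_in1 bp_in2 bp_pr1 bp_pr2 }.

Lemma biprod_data_inhabited (A B : C) : inhabited (biprod_data A B).
Proof.
have [_ [bpAB _ _ _ _]] := HC; have [S [i1 [i2 [p1 [p2 bpS]]]]] := bpAB A B.
by constructor; exact: BiprodData bpS.
Qed.

Definition biprod_of (A B : C) : biprod_data A B :=
  epsilon (biprod_data_inhabited A B) (fun _ => True).

Definition bsum (A B : C) : C := bp_obj (biprod_of A B).

Definition zobj : C := proj1_sig (constructive_indefinite_description _ (proj1 HC)).

Lemma zobjP : is_zero_obj zobj.
Proof. exact: proj2_sig (constructive_indefinite_description _ (proj1 HC)). Qed.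

Definition bigsum (L : seq C) : C := foldr bsum zobj L.

Lemma bsum_iso (A B A' B' : C) :
  is_iso A A' -> is_iso B B' -> is_iso (bsum A B) (bsum A' B').
Proof. exact: biprod_iso (bp_biprod _) (bp_biprod _). Qed.

Lemma bsum_isor (A B B' : C) : is_iso B B' -> is_iso (bsum A B) (bsum A B').
Proof. exact/bsum_iso/iso_refl. Qed.

Lemma bsumC (A B : C) : is_iso (bsum A B) (bsum B A).
Proof.
exact: biprod_iso (biprod_swap (bp_biprod _)) (bp_biprod _) (iso_refl _) (iso_refl _).
Qed.

Lemma bsum0 (A Z : C) : is_zero_obj Z -> is_iso (bsum A Z) A.
Proof.
by move=> hZ; apply: biprod_iso (bp_biprod _) (biprod_zero A hZ) (iso_refl _) (iso_refl _).
Qed.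

Lemma bsumA (A B D : C) : is_iso (bsum A (bsum B D)) (bsum (bsum A B) D).
Proof.
have bp := biprod_assoc (bp_biprod (biprod_of A (bsum B D)))
  (bp_biprod (biprod_of B D)) (bp_biprod (biprod_of A B)).
exact: biprod_iso bp (bp_biprod _) (iso_refl _) (iso_refl _).
Qed.

Lemma bigsum_cat (L1 L2 : seq C) : is_iso (bigsum (L1 ++ L2)) (bsum (bigsum L1) (bigsum L2)).
Proof.
elim: L1 => [|X L1 IH] /=.
  exact/iso_sym/(iso_trans (bsumC _ _))/bsum0/zobjP.
exact: iso_trans (bsum_isor _ IH) (bsumA _ _ _).
Qed.

Lemma bigsum_isol (L1 L1' L2 : seq C) :
  is_iso (bigsum L1) (bigsum L1') -> is_iso (bigsum (L1 ++ L2)) (bigsum (L1' ++ L2)).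
Proof.
move=> isoL1; apply: iso_trans (bigsum_cat _ _) _.
apply: iso_trans _ (iso_sym (bigsum_cat _ _)).
exact: bsum_iso isoL1 (iso_refl _).
Qed.

Lemma bigsum_perm (L L' : seq C) : Permutation L L' -> is_iso (bigsum L) (bigsum L').
Proof.
elim=> [|X l l' _ isol | X Y l | l l' l'' _ iso1 _ iso2] /=.
- exact: iso_refl.
- exact: bsum_isor.
- apply: iso_trans (bsumA _ _ _) _; apply: iso_trans _ (iso_sym (bsumA _ _ _)).
  exact: bsum_iso (bsumC _ _) (iso_refl _).
- exact: iso_trans iso1 iso2.
Qed.

Lemma biprod_seq_bigsum (L : seq C) (S : C) : is_biprod_seq L S -> is_iso S (bigsum L).
Proof.
elim: L S => [|X L IH] S /=; first by move/zero_iso; apply; apply: zobjP.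
move=> [T [bpT [i1 [i2 [p1 [p2 bpS]]]]]].
exact: biprod_iso bpS (bp_biprod _) (iso_refl _) (IH _ bpT).
Qed.

End ChosenBiproducts.

Section Parity.
Variable T : Type.
Implicit Types (f : nat -> T) (n : nat).

Definition evens f n := [seq f i | i <- iota 0 n.+1 & ~~ odd i].
Definition odds f n := [seq f i | i <- iota 0 n.+1 & odd i].

Lemma map_filter_iotaS (a : pred nat) f n :
  [seq f i | i <- iota 0 n.+1 & a i] =
  (if a 0%N then [:: f 0%N] else [::]) ++ [seq f i.+1 | i <- iota 0 n & a i.+1].
Proof.
have -> : iota 0 n.+1 = 0%N :: map succn (iota 0 n) by rewrite -(iotaDl 1 0).
by rewrite /= filter_map; case: (a 0%N); rewrite /= -map_comp.
Qed.

Lemma evensS f n : evens f n.+1 = f 0%N :: odds (fun i => f i.+1) n.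
Proof. by rewrite /evens map_filter_iotaS; under eq_filter do rewrite /= negbK. Qed.

Lemma oddsS f n : odds f n.+1 = evens (fun i => f i.+1) n.
Proof. by rewrite /odds map_filter_iotaS. Qed.

Lemma evens_rcons f n :
  evens f n.+1 = evens f n ++ (if odd n.+1 then [::] else [:: f n.+1]).
Proof.
rewrite /evens -[n.+2]addn1 iotaD filter_cat map_cat add0n /=.
by case: (odd n).
Qed.

Lemma odds_rcons f n :
  odds f n.+1 = odds f n ++ (if odd n.+1 then [:: f n.+1] else [::]).
Proof.
rewrite /odds -[n.+2]addn1 iotaD filter_cat map_cat add0n /=.
by case: (odd n).
Qed.

Lemma eq_evens f g n : (forall i, (i <= n)%N -> f i = g i) -> evens f n = evens g n.
Proof. by move=> fg; apply/eq_in_map => i; rewrite mem_filter mem_iota => /andP[_ /fg]. Qed.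

Lemma eq_odds f g n : (forall i, (i <= n)%N -> f i = g i) -> odds f n = odds g n.
Proof. by move=> fg; apply/eq_in_map => i; rewrite mem_filter mem_iota => /andP[_ /fg]. Qed.

End Parity.

Section ParitySums.
Variables (C : precat) (HC : abelian C).
Local Notation bsum := (bsum HC).
Local Notation bigsum := (bigsum HC).

Lemma cat_app (T : Type) (s1 s2 : seq T) : s1 ++ s2 = List.app s1 s2.
Proof. by elim: s1 => //= x s1 ->. Qed.

Lemma bigsum_map_bsum (I : Type) (A B : I -> C) (s : seq I) :
  is_iso (bigsum [seq bsum (A i) (B i) | i <- s]) (bigsum (map A s ++ map B s)).
Proof.
elim: s => [|i s IH] /=; first exact: iso_refl.
apply: iso_trans (bsum_iso HC (iso_refl _) IH) _.
apply: iso_trans (iso_sym (bsumA HC _ _ _)) _.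
apply/bsum_isor/(bigsum_perm HC (L := B i :: _)).
by rewrite !cat_app; apply: Permutation_middle.
Qed.

Lemma bigsum_parity_interleave (P Q G : nat -> C) (r : nat) :
  (forall k, (k < r)%N -> G k = bsum (P k) (Q k.+1)) -> G r = P r ->
  is_iso (bigsum (evens G r)) (bigsum (evens P r ++ odds Q r)) /\
  is_iso (bigsum (Q 0%N :: odds G r)) (bigsum (odds P r ++ evens Q r)).
Proof.
case: r => [|s] GE Gr; first by rewrite /= Gr; split; apply: iso_refl.
have GE' : forall k, (k <= s)%N -> G k = bsum (P k) (Q k.+1) by move=> k /GE.
rewrite (evensS Q) (oddsS Q) (evens_rcons G) (odds_rcons G) (evens_rcons P) (odds_rcons P).
rewrite (eq_evens GE') (eq_odds GE') Gr.
split.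
  apply: iso_trans (bigsum_isol _ (bigsum_map_bsum _ _ _)) _.
  apply: bigsum_perm; rewrite !cat_app -!List.app_assoc.
  by apply/Permutation_app_head/Permutation_app_comm.
apply: iso_trans (bsum_isor HC _ (bigsum_isol _ (bigsum_map_bsum _ _ _))) _.
apply: (bigsum_perm HC (L := _ :: _)); rewrite !cat_app -!List.app_assoc.
apply: Permutation_trans (Permutation_middle _ _ _) _.
exact/Permutation_app_head/(Permutation_app_comm (_ :: _)).
Qed.

End ParitySums.

Section Abelian.
Variables (C : precat) (HC : abelian C).

Lemma kernel_factor (A B K X : C) (g : Hom A B) (k : Hom K A) (x : Hom X A) :
  is_kernel g k -> comp g x = 0 -> exists y, comp k y = x.
Proof. by move=> [_ kP] /kP [y [ky _]]; exists y. Qed.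

Lemma cokernel_factor (A B D X : C) (f : Hom A B) (c : Hom B D) (x : Hom B X) :
  is_cokernel f c -> comp x f = 0 -> exists y, comp y c = x.
Proof. by move=> [_ cP] /cP [y [yc _]]; exists y. Qed.

Lemma cokernel0_epi (A B D : C) (f : Hom A B) (c : Hom B D) :
  is_cokernel f c -> c = 0 -> epi f.
Proof.
move=> cokc c0 X u v uv; apply/eqP; rewrite -subr_eq0.
have [|w <-] := cokernel_factor cokc (x := u - v); first by rewrite compBm uv subrr.
by rewrite c0 compm0.
Qed.

Lemma mono_epi_inverse (A B : C) (e : Hom A B) :
  mono e -> epi e -> exists v, comp v e = idm A /\ comp e v = idm B.
Proof.
move=> mono_e epi_e; have [_ [_ _ _ _ epi_coker]] := HC.
have [K [w cokw]] := epi_coker _ _ _ epi_e.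
have w0 : w = 0 by apply: mono_e; rewrite (proj1 cokw) compm0.
have [|v ve] := cokernel_factor cokw (x := idm A); first by rewrite w0 compm0.
exists v; split=> //; apply: epi_e.
by rewrite -compA ve compm1 comp1m.
Qed.

Lemma exact_at_factor (A B D : C) (f : Hom A B) (g : Hom B D) : exact_at f g ->
  exists K (k : Hom K B) (f' : Hom A K), [/\ is_kernel g k, comp k f' = f & epi f'].
Proof.
move=> [gf0 exact_fg]; have [_ [_ ker_ex coker_ex mono_ker _]] := HC.
have [K [k kerk]] := ker_ex _ _ g.
have [f' kf'] := kernel_factor kerk gf0.
exists K, k, f'; split=> //.
have [D' [c cokc]] := coker_ex _ _ f.
have ck0 := exact_fg _ _ _ _ kerk cokc.
have [Q [q cokq]] := coker_ex _ _ f'.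
have [J [j kerj]] := ker_ex _ _ q.
have [f1 jf1] := kernel_factor kerj (proj1 cokq).
have [D'' [h kerh]] := mono_ker _ _ _ (mono_comp (kernel_mono kerk) (kernel_mono kerj)).
have hf0 : comp h f = 0.
  by rewrite -kf' -jf1 !compA -(compA h) (proj1 kerh) !comp0m.
have [h' h'c] := cokernel_factor cokc hf0.
have hk0 : comp h k = 0 by rewrite -h'c -compA ck0 compm0.
have [t kjt] := kernel_factor kerh hk0.
have jt1 : comp j t = idm K.
  by apply: (kernel_mono kerk); rewrite compm1 compA kjt.
apply: (cokernel0_epi cokq).
by rewrite -[q]compm1 -jt1 compA (proj1 kerj) comp0m.
Qed.

Definition epi_on_proj (A B : C) (g : Hom A B) :=
  forall P (x : Hom P B), projective P -> exists y, comp g y = x.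
Definition mono_on_proj (A B : C) (f : Hom A B) :=
  forall P (x : Hom P A), projective P -> comp f x = 0 -> x = 0.
Definition exact_on_proj (A B D : C) (f : Hom A B) (g : Hom B D) :=
  forall P (x : Hom P B), projective P -> comp g x = 0 -> exists y, comp f y = x.

Lemma exact_at_on_proj (A B D : C) (f : Hom A B) (g : Hom B D) :
  exact_at f g -> exact_on_proj f g.
Proof.
move=> /exact_at_factor [K [k [f' [kerk kf' epi_f']]]] P x projP gx0.
have [x' kx'] := kernel_factor kerk gx0.
have [y f'y] := projP _ _ _ epi_f' x'.
by exists y; rewrite -kf' -compA f'y.
Qed.

Lemma exact_at_mono_factor (A B D X : C) (f : Hom A B) (g : Hom B D) (x : Hom X B) :
  exact_at f g -> mono f -> comp g x = 0 -> exists y, comp f y = x.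
Proof.
move=> /exact_at_factor [K [k [f' [kerk kf' epi_f']]]] mono_f gx0.
have [x' kx'] := kernel_factor kerk gx0.
have mono_f' : mono f' by move=> Y a b f'ab; apply: mono_f; rewrite -kf' -!compA f'ab.
have [v [_ f'v]] := mono_epi_inverse mono_f' epi_f'.
by exists (comp v x'); rewrite -kf' -compA (compA f') f'v comp1m.
Qed.

End Abelian.

Section Corestriction.
Variables (C : precat) (A Y1 Y0 K : C) (d : Hom Y1 Y0) (k : Hom K Y1).
Variables (f : Hom A Y1) (f' : Hom A K).
Hypotheses (kerk : is_kernel d k) (kf' : comp k f' = f).

Lemma corestr_comp0 (B : C) (g : Hom B A) : comp f g = 0 -> comp f' g = 0.
Proof. by move=> fg0; apply: (kernel_mono kerk); rewrite compA kf' fg0 compm0. Qed.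

Lemma corestr_mono_on_proj : mono_on_proj f -> mono_on_proj f'.
Proof.
by move=> mono_f P x projP /(congr1 (comp k)); rewrite compA kf' compm0 => /mono_f; apply.
Qed.

Lemma corestr_exact_on_proj (B : C) (g : Hom B A) :
  exact_on_proj g f -> exact_on_proj g f'.
Proof.
by move=> exact_gf P x projP f'x0; apply: exact_gf => //; rewrite -kf' -compA f'x0 compm0.
Qed.

Lemma corestr_epi_on_proj : exact_on_proj f d -> epi_on_proj f'.
Proof.
move=> exact_fd P x projP.
have [|y fy] := exact_fd P (comp k x) projP; first by rewrite compA (proj1 kerk) comp0m.
by exists y; apply: (kernel_mono kerk); rewrite compA kf'.
Qed.

End Corestriction.

Section SplitComplex.
Variables (C : precat) (HC : abelian C).
Local Notation bigsum := (bigsum HC).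

Lemma epi_mono_on_proj_iso (T Y : C) (t : Hom T Y) : projective T -> projective Y ->
  epi_on_proj t -> mono_on_proj t -> is_iso Y T.
Proof.
move=> projT projY epi_t mono_t; have [s ts] := epi_t _ (idm Y) projY.
exists s, t; split=> //; apply/eqP; rewrite -subr_eq0; apply/eqP/(mono_t _ _ projT).
by rewrite compmB compA ts comp1m compm1 subrr.
Qed.

Lemma kernel_complement (Y0 Y1 : C) (d : Hom Y1 Y0) :
  projective Y0 -> projective Y1 -> epi_on_proj d ->
  exists K (k : Hom K Y1), [/\ is_kernel d k, projective K & is_iso (bsum HC Y0 K) Y1].
Proof.
move=> projY0 projY1 epi_d; have [s ds] := epi_d _ (idm Y0) projY0.
have [_ [_ ker_ex _ _ _]] := HC; have [K [k kerk]] := ker_ex _ _ d.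
have [p kp] : exists p, comp k p = idm Y1 - comp s d.
  by apply: (kernel_factor kerk); rewrite compmB compm1 compA ds comp1m subrr.
have dk0 : comp d k = 0 := proj1 kerk.
have bpY1 : is_biprod s k d p.
  split=> //.
  - apply: (kernel_mono kerk).
    by rewrite compA kp compBm comp1m compm1 -compA dk0 compm0 subr0.
  - apply: (kernel_mono kerk).
    by rewrite compA kp compBm comp1m -compA ds compm1 subrr compm0.
  - by rewrite kp addrC subrK.
exists K, k; split=> //; first by case: bpY1 => _ pk _ _ _; apply: retract_projective pk projY1.
exact: biprod_iso (bp_biprod _) bpY1 (iso_refl _) (iso_refl _).
Qed.

(* The complex [0 -> T --t--> Y m --D (m-1)--> ... --D 0--> Y 0 -> 0], exact when
   tested against maps out of projectives (which suffices to split it, all of its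
   terms being projective); when [m = 0] the map [t] is both the top and the
   bottom map. *)
Definition complex_ends (m : nat) (Y : nat -> C) (D : forall k, Hom (Y k.+1) (Y k))
    (T : C) : Hom T (Y m) -> Prop :=
  match m as m0 return Hom T (Y m0) -> Prop with
  | 0 => fun t => epi_on_proj t
  | j.+1 => fun t => [/\ comp (D j) t = 0, exact_on_proj t (D j) & epi_on_proj (D 0%N)]
  end.

Definition proj_exact_complex (m : nat) (Y : nat -> C) (D : forall k, Hom (Y k.+1) (Y k))
    (T : C) (t : Hom T (Y m)) : Prop :=
  [/\ forall k, (k <= m)%N -> projective (Y k), projective T,
      forall k, (k.+2 <= m)%N -> comp (D k) (D k.+1) = 0 /\ exact_on_proj (D k.+1) (D k),
      mono_on_proj t & complex_ends D t].

Definition peel_obj (K : C) (Y : nat -> C) (i : nat) : C :=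
  match i with 0 => K | j.+1 => Y j.+2 end.

Lemma proj_exact_complex_peel m Y D T t : @proj_exact_complex m.+1 Y D T t ->
  exists K (D' : forall k, Hom (peel_obj K Y k.+1) (peel_obj K Y k))
    (t' : Hom T (peel_obj K Y m)),
  is_iso (bsum HC (Y 0%N) K) (Y 1%N) /\ proj_exact_complex D' t'.
Proof.
move=> [projY projT cxY mono_t [Dt0 exact_t epi_D0]].
have [K [k [kerk projK isoK]]] := kernel_complement (projY 0%N isT) (projY 1%N isT) epi_D0.
exists K; case: m => [|j] in t projY cxY mono_t Dt0 exact_t *.
  have [t' kt'] := kernel_factor kerk Dt0.
  exists (fun _ => 0), t'; split=> //; split=> //.
  - by case.
  - exact: corestr_mono_on_proj kt' mono_t.
  - exact: corestr_epi_on_proj kerk kt' exact_t.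
have [D0D1 exact_D1] := cxY 0%N isT.
have [d1 kd1] := kernel_factor kerk D0D1.
pose D' k : Hom (peel_obj K Y k.+1) (peel_obj K Y k) :=
  match k with 0 => d1 | i.+1 => D i.+2 end.
exists D', t; split=> //; split=> //.
- by case=> [|i] // lei; apply: projY.
- case=> [|i] lei; rewrite /D' /=; last exact: cxY i.+2 lei.
  have [D1D2 exact_D2] := cxY 1%N lei.
  exact (conj (corestr_comp0 kerk kd1 D1D2) (corestr_exact_on_proj kd1 exact_D2)).
- have epi_d1 : epi_on_proj d1 := corestr_epi_on_proj kerk kd1 exact_D1.
  case: j => [|i] in t projY mono_t Dt0 exact_t cxY *; split=> //; rewrite /D' /=.
  + exact (corestr_comp0 kerk kd1 Dt0).
  + exact (corestr_exact_on_proj kd1 exact_t).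
Qed.

Lemma proj_exact_complex_parity m Y D T t : @proj_exact_complex m Y D T t ->
  forall Yf : nat -> C, (forall k, (k <= m)%N -> Yf k = Y k) -> Yf m.+1 = T ->
  is_iso (bigsum (evens Yf m.+1)) (bigsum (odds Yf m.+1)).
Proof.
elim: m => [|m IH] in Y D T t * => cx Yf YfY YfT.
  have [projY projT _ mono_t epi_t] := cx.
  rewrite evensS oddsS /= YfT YfY //.
  exact (bsum_iso HC (epi_mono_on_proj_iso projT (projY 0%N isT) epi_t mono_t) (iso_refl _)).
have [K [D' [t' [isoK cx']]]] := proj_exact_complex_peel cx.
pose Yf' i := match i with 0 => K | j.+1 => Yf j.+2 end.
have Yf'Y k : (k <= m)%N -> Yf' k = peel_obj K Y k by case: k => // k lek; apply: YfY.
have IHm := IH _ D' _ t' cx' Yf' Yf'Y YfT; rewrite evensS oddsS in IHm.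
rewrite (evensS Yf) (oddsS Yf) oddsS evensS (YfY 0%N) // (YfY 1%N) //.
apply: iso_trans (bsum_isor HC _ (iso_sym IHm)) _.
exact: iso_trans (bsumA HC _ _ _) (bsum_iso HC isoK (iso_refl _)).
Qed.

End SplitComplex.

Section Comparison.
Variables (C : precat) (HC : abelian C) (N M : C).

Definition aobj r (E : ext N M r) (i : nat) : C :=
  match i with 0 => N | j.+1 => eobj E j end.

Definition adiff r (E : ext N M r) (i : nat) : Hom (aobj E i.+1) (aobj E i) :=
  match i with 0 => eaug E | j.+1 => ediff E j end.

Lemma exact_ext_aug r (E : ext N M r) : exact_ext E ->
  [/\ epi (adiff E 0), mono (eincl E), exact_at (eincl E) (adiff E r)
    & forall i, (i < r)%N -> exact_at (adiff E i.+1) (adiff E i)].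
Proof.
case=> epi_aug top_exact bot_exact mid_exact; split=> //.
- by destruct r; case: top_exact.
- by destruct r; case: top_exact.
- by case=> [|i] lti; [apply: bot_exact | apply: mid_exact].
Qed.

Definition proj_ext r (E : ext N M r) := forall i, (i <= r)%N -> projective (eobj E i).

Definition chain_map r (E G : ext N M r) (f : forall i, Hom (aobj E i) (aobj G i)) :=
  forall i, (i <= r)%N -> comp (f i) (adiff E i) = comp (adiff G i) (f i.+1).

(* A chain map vanishing on [N] is null-homotopic. *)
Lemma chain_map_null_factor r (E G : ext N M r) (f : forall i, Hom (aobj E i) (aobj G i))
    (al : Hom M M) :
  exact_ext E -> exact_ext G -> proj_ext E -> chain_map f -> f 0%N = 0 ->
  comp (f r.+1) (eincl E) = comp (eincl G) al -> exists h, al = comp h (eincl E).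
Proof.
move=> /exact_ext_aug [_ _ topE midE] /exact_ext_aug [_ mono_iG topG midG] projE chain_f f0 fal.
have homotopy k : (k <= r)%N -> exists s : Hom (aobj E k) (aobj G k.+1),
    comp (adiff G k) (f k.+1 - comp s (adiff E k)) = 0.
  elim: k => [|k IH] lekr.
    by exists 0; rewrite comp0m subr0 -chain_f // f0 comp0m.
  have [s dfs] := IH (ltnW lekr).
  have [u du] := exact_at_on_proj HC (midG k lekr) (projE k (ltnW lekr)) dfs.
  exists u; rewrite compmB -chain_f // compA du compBm -compA (proj1 (midE k lekr)).
  by rewrite compm0 subr0 subrr.
have [s dfs] := homotopy r (leqnn r).
have [h ih] := exact_at_on_proj HC topG (projE r (leqnn r)) dfs.
exists h; apply: mono_iG.
by rewrite compA ih compBm -fal -compA (proj1 topE) compm0 subr0.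
Qed.

Definition lift_along (X A B : C) (g : Hom A B) (x : Hom X B) : Hom X A :=
  epsilon (inhabits 0) (fun y => comp g y = x).

Lemma lift_alongP (X A B : C) (g : Hom A B) (x : Hom X B) :
  (exists y, comp g y = x) -> comp g (lift_along g x) = x.
Proof. exact: epsilon_spec. Qed.

Fixpoint comparison r (E G : ext N M r) (i : nat) : Hom (aobj E i) (aobj G i) :=
  match i with
  | 0 => idm N
  | j.+1 => lift_along (adiff G j) (comp (comparison E G j) (adiff E j))
  end.

Lemma comparison_chain r (E G : ext N M r) :
  exact_ext E -> exact_ext G -> proj_ext E -> chain_map (comparison E G).
Proof.
move=> /exact_ext_aug [_ _ _ midE] /exact_ext_aug [epi_augG _ _ midG] projE.
elim=> [|j IH] lejr; apply/esym/lift_alongP.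
  exact: projE 0%N lejr _ _ _ epi_augG _.
apply: (exact_at_on_proj HC (midG j lejr) (projE j.+1 lejr)).
by rewrite compA -(IH (ltnW lejr)) -compA (proj1 (midE j lejr)) compm0.
Qed.

Lemma chain_map_on_M r (E G : ext N M r) (f : forall i, Hom (aobj E i) (aobj G i)) :
  exact_ext E -> exact_ext G -> chain_map f ->
  exists al, comp (f r.+1) (eincl E) = comp (eincl G) al.
Proof.
move=> /exact_ext_aug [_ _ topE _] /exact_ext_aug [_ mono_iG topG _] chain_f.
have [|al ial] := exact_at_mono_factor HC topG mono_iG (x := comp (f r.+1) (eincl E)).
  by rewrite compA -chain_f // -compA (proj1 topE) compm0.
by exists al.
Qed.

End Comparison.

Section YonedaInvariance.
Variables (C : precat) (HC : abelian C) (N M : C).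

Definition comparison_trivial r (E G : ext N M r) : Prop :=
  forall f : forall i, Hom (aobj E i) (aobj G i), chain_map f -> f 0%N = idm N ->
  forall al, comp (f r.+1) (eincl E) = comp (eincl G) al ->
  exists h : Hom (eobj E r) M, al - idm M = comp h (eincl E).

Lemma ext_mor_chain r (G H : ext N M r) : ext_mor G H ->
  exists psi : forall i, Hom (aobj G i) (aobj H i),
    [/\ chain_map psi, psi 0%N = idm N & comp (psi r.+1) (eincl G) = eincl H].
Proof.
case=> phi [phi0 phir phiD].
exists (fun i => match i return Hom (aobj G i) (aobj H i) with 0 => idm N | j.+1 => phi j end).
by split=> // -[|j] lejr /=; [rewrite comp1m phi0 | apply: phiD].
Qed.

Lemma chain_map_comp r (E G H : ext N M r) (f : forall i, Hom (aobj E i) (aobj G i))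
    (g : forall i, Hom (aobj G i) (aobj H i)) :
  chain_map f -> chain_map g -> chain_map (fun i => comp (g i) (f i)).
Proof. by move=> chain_f chain_g i lei; rewrite -compA chain_f // !compA chain_g. Qed.

Lemma chain_mapB r (E G : ext N M r) (f g : forall i, Hom (aobj E i) (aobj G i)) :
  chain_map f -> chain_map g -> chain_map (fun i => f i - g i).
Proof. by move=> chain_f chain_g i lei; rewrite compBm compmB chain_f // chain_g. Qed.

Lemma comparison_trivial_refl r (E : ext N M r) :
  exact_ext E -> proj_ext E -> comparison_trivial E E.
Proof.
move=> exE projE f chain_f f0 al fal.
have chain_1 : chain_map (fun i => idm (aobj E i)) by move=> i _; rewrite comp1m compm1.
apply: (chain_map_null_factor HC exE exE projE (chain_mapB chain_f chain_1)).
  by rewrite /= f0 subrr.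
by rewrite /= compBm fal comp1m compmB compm1.
Qed.

Lemma comparison_trivial_mor r (E G H : ext N M r) :
  exact_ext E -> proj_ext E -> exact_ext G -> exact_ext H -> ext_mor G H ->
  comparison_trivial E G -> comparison_trivial E H.
Proof.
move=> exE projE exG exH /ext_mor_chain [psi [chain_psi psi0 psir]] trivG f chain_f f0 al fal.
have chain_f' := comparison_chain HC exE exG projE.
have [al' fal'] := chain_map_on_M HC exE exG chain_f'.
have [h' h'E] := trivG _ chain_f' erefl al' fal'.
have [||h hE] := chain_map_null_factor HC exE exH projE
  (chain_mapB chain_f (chain_map_comp chain_f' chain_psi)) (al := al - al').
- by rewrite /= f0 psi0 comp1m subrr.
- by rewrite /= compBm fal -compA fal' compA psir compmB.
by exists (h + h'); rewrite compDl -hE -h'E addrA subrK.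
Qed.

Lemma comparison_trivial_mor_inv r (E G H : ext N M r) :
  ext_mor G H -> comparison_trivial E H -> comparison_trivial E G.
Proof.
move=> /ext_mor_chain [psi [chain_psi psi0 psir]] trivH f chain_f f0 al fal.
apply: (trivH _ (chain_map_comp chain_f chain_psi)); first by rewrite /= psi0 f0 comp1m.
by rewrite /= -compA fal compA psir.
Qed.

Lemma comparison_trivial_yoneda r (E G H : ext N M r) :
  exact_ext E -> proj_ext E -> yoneda_equiv G H ->
  (exact_ext G -> exact_ext H /\ (comparison_trivial E G -> comparison_trivial E H)) /\
  (exact_ext H -> exact_ext G /\ (comparison_trivial E H -> comparison_trivial E G)).
Proof.
move=> exE projE; elim=> [X Y [exX exY morXY] | X | X Y _ [XY YX] | X Y Z _ [XY YX] _ [YZ ZY]].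
- split=> _; split=> //; first exact: comparison_trivial_mor morXY.
  exact: comparison_trivial_mor_inv morXY.
- by split=> exX; split.
- by split.
split=> [/XY [/YZ [exZ YZt] XYt] | /ZY [/YX [exX YXt] ZYt]]; split=> // trivX.
  exact/YZt/XYt.
exact/YXt/ZYt.
Qed.

End YonedaInvariance.

Section MappingCone.
Variables (C : precat) (HC : abelian C) (N M : C) (r : nat) (E F : ext N M r).
Variable g : forall i, Hom (eobj E i) (eobj F i).
Hypotheses (exE : exact_ext E) (exF : exact_ext F).
Hypotheses (g_aug : comp (eaug F) (g 0%N) = eaug E) (g_incl : comp (g r) (eincl E) = eincl F).
Hypothesis g_diff : forall i, (i < r)%N -> comp (g i) (ediff E i) = comp (ediff F i) (g i.+1).

Local Notation cb j := (biprod_of HC (eobj E j) (eobj F j.+1)).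
Local Notation in1 j := (bp_in1 (cb j)).
Local Notation in2 j := (bp_in2 (cb j)).
Local Notation pr1 j := (bp_pr1 (cb j)).
Local Notation pr2 j := (bp_pr2 (cb j)).

(* The mapping cone of [g], shifted so that [cone_obj 0 = Q_0] and
   [cone_obj j.+1 = P_j (+) Q_{j+1}]; its top map is [cone_top r] from [P_r]. *)
Definition cone_obj (i : nat) : C :=
  match i with 0 => eobj F 0 | j.+1 => bsum HC (eobj E j) (eobj F j.+1) end.

Definition cone_diff (i : nat) : Hom (cone_obj i.+1) (cone_obj i) :=
  match i with
  | 0 => comp (g 0%N) (pr1 0%N) + comp (ediff F 0) (pr2 0%N)
  | j.+1 => comp (in1 j) (comp (- ediff E j) (pr1 j.+1)) +
            comp (in2 j) (comp (g j.+1) (pr1 j.+1) + comp (ediff F j.+1) (pr2 j.+1))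
  end.

Definition cone_top (i : nat) : Hom (eobj E i) (cone_obj i) :=
  match i with
  | 0 => g 0%N
  | j.+1 => comp (in1 j) (- ediff E j) + comp (in2 j) (g j.+1)
  end.

Lemma pr1_cone_diff j : comp (pr1 j) (cone_diff j.+1) = - comp (ediff E j) (pr1 j.+1).
Proof. by rewrite /= (biprod_pr1 (bp_biprod _)) compNm. Qed.

Lemma pr2_cone_diff j : comp (pr2 j) (cone_diff j.+1) =
  comp (g j.+1) (pr1 j.+1) + comp (ediff F j.+1) (pr2 j.+1).
Proof. exact: (biprod_pr2 (bp_biprod _)). Qed.

Lemma cone_diff0E (X : C) (x : Hom X (cone_obj 1)) :
  comp (cone_diff 0) x = comp (g 0%N) (comp (pr1 0%N) x) + comp (ediff F 0) (comp (pr2 0%N) x).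
Proof. by rewrite /= compDl -!compA. Qed.

Lemma cone_diff_comp0 k : (k.+2 <= r)%N -> comp (cone_diff k) (cone_diff k.+1) = 0.
Proof.
have [_ _ _ midE] := exact_ext_aug exE; have [_ _ _ midF] := exact_ext_aug exF.
case: k => [|j] lekr.
  rewrite cone_diff0E pr1_cone_diff pr2_cone_diff compmN compDr !compA (g_diff (ltnW lekr)).
  by rewrite (proj1 (midF 1%N lekr)) comp0m addr0 addNr.
apply: (biprod_hom_eq (bp_biprod (cb j))); rewrite compm0 compA.
  rewrite pr1_cone_diff compNm -compA pr1_cone_diff compmN opprK compA.
  by rewrite (proj1 (midE j.+1 (ltnW lekr))) comp0m.
rewrite pr2_cone_diff compDl -!compA pr1_cone_diff pr2_cone_diff compmN compDr !compA.
by rewrite (g_diff (ltnW lekr)) (proj1 (midF j.+2 lekr)) comp0m addr0 addNr.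
Qed.

Lemma cone_cycle k (X : C) (x : Hom X (cone_obj k.+1)) : (k < r)%N ->
  comp (cone_diff k) x = 0 ->
  comp (adiff E k) (comp (pr1 k) x) = 0 /\
  comp (g k) (comp (pr1 k) x) + comp (ediff F k) (comp (pr2 k) x) = 0.
Proof.
have [_ _ _ midF] := exact_ext_aug exF.
case: k => [|j] in x * => ltkr; last first.
  move=> Dx0; have := congr1 (comp (pr1 j)) Dx0; have := congr1 (comp (pr2 j)) Dx0.
  rewrite !compm0 !compA pr1_cone_diff pr2_cone_diff compDl compNm -!compA.
  by move=> h2 /eqP; rewrite oppr_eq0 => /eqP h1; split.
rewrite cone_diff0E => gx0; split=> //=.
rewrite -g_aug -compA; move/eqP: gx0; rewrite addr_eq0 => /eqP ->.
by rewrite compmN compA (proj1 (midF 0%N ltkr)) comp0m oppr0.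
Qed.

Lemma cone_exact_mid k : (k.+2 <= r)%N -> exact_on_proj (cone_diff k.+1) (cone_diff k).
Proof.
have [_ _ _ midE] := exact_ext_aug exE; have [_ _ _ midF] := exact_ext_aug exF.
move=> lekr P x projP /(cone_cycle (ltnW lekr)) [dEa gac].
have [a0 ea0] := exact_at_on_proj HC (midE k (ltnW lekr)) projP dEa.
have dFgac : comp (ediff F k) (comp (g k.+1) a0 + comp (pr2 k) x) = 0.
  by rewrite compDr compA -(g_diff (ltnW lekr)) -compA ea0.
have [b0 eb0] := exact_at_on_proj HC (midF k.+1 lekr) projP dFgac.
exists (comp (in1 k.+1) (- a0) + comp (in2 k.+1) b0).
apply: (biprod_hom_eq (bp_biprod (cb k))); rewrite compA.
  by rewrite pr1_cone_diff compNm -compA (biprod_pr1 (bp_biprod _)) compmN opprK ea0.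
by rewrite pr2_cone_diff compDl -!compA (biprod_pr1 (bp_biprod _)) (biprod_pr2 (bp_biprod _))
  compmN eb0 addKr.
Qed.

Lemma cone_diff_top k : (k < r)%N -> comp (cone_diff k) (cone_top k.+1) = 0.
Proof.
have [_ _ _ midE] := exact_ext_aug exE.
case: k => [|j] ltkr.
  rewrite cone_diff0E (biprod_pr1 (bp_biprod _)) (biprod_pr2 (bp_biprod _)).
  by rewrite compmN g_diff // addNr.
apply: (biprod_hom_eq (bp_biprod (cb j))); rewrite compm0 compA.
  by rewrite pr1_cone_diff compNm -compA (biprod_pr1 (bp_biprod _)) compmN opprK
    (proj1 (midE j.+1 ltkr)).
rewrite pr2_cone_diff compDl -!compA (biprod_pr1 (bp_biprod _)) (biprod_pr2 (bp_biprod _)).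
by rewrite compmN g_diff // addNr.
Qed.

Lemma cone_diff0_epi : (0 < r)%N -> epi_on_proj (cone_diff 0).
Proof.
have [epi_augE _ _ _] := exact_ext_aug exE; have [_ _ _ midF] := exact_ext_aug exF.
move=> lt0r P x projP.
have [a ea] := projP _ _ _ epi_augE (comp (eaug F) x).
have [|b eb] := exact_at_on_proj HC (midF 0%N lt0r) projP (x := x - comp (g 0%N) a).
  by rewrite compmB compA g_aug ea subrr.
exists (comp (in1 0%N) a + comp (in2 0%N) b).
by rewrite cone_diff0E (biprod_pr1 (bp_biprod _)) (biprod_pr2 (bp_biprod _)) eb addrC subrK.
Qed.

Lemma cone_top_kernel k (X : C) (x : Hom X (eobj E k)) :
  comp (cone_top k) x = 0 -> comp (adiff E k) x = 0 /\ comp (g k) x = 0.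
Proof.
case: k => [|j] in x * => /= tx0; first by rewrite -g_aug -compA tx0 compm0.
have := congr1 (comp (pr1 j)) tx0; have := congr1 (comp (pr2 j)) tx0.
rewrite !compm0 !compA (biprod_pr1 (bp_biprod _)) (biprod_pr2 (bp_biprod _)) => ->.
by rewrite compNm => /eqP; rewrite oppr_eq0 => /eqP.
Qed.

Lemma cone_top_mono : mono_on_proj (cone_top r).
Proof.
have [_ _ topE _] := exact_ext_aug exE; have [_ mono_iF _ _] := exact_ext_aug exF.
move=> P x projP /cone_top_kernel [dEx gx].
have [m mx] := exact_at_on_proj HC topE projP dEx.
have m0 : m = 0 by apply: mono_iF; rewrite -g_incl -compA mx gx compm0.
by rewrite -mx m0 compm0.
Qed.

End MappingCone.

Lemma cone_proj_exact (C : precat) (HC : abelian C) (N M : C) r (E F : ext N M r)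
    (g : forall i, Hom (eobj E i) (eobj F i)) :
  exact_ext E -> exact_ext F -> proj_ext E -> proj_ext F ->
  comp (eaug F) (g 0%N) = eaug E -> comp (g r) (eincl E) = eincl F ->
  (forall i, (i < r)%N -> comp (g i) (ediff E i) = comp (ediff F i) (g i.+1)) ->
  proj_exact_complex (cone_diff HC g) (cone_top HC g r).
Proof.
move=> exE exF projE projF g_aug g_incl g_diff.
have [epi_augE _ topE midE] := exact_ext_aug exE; have [_ _ topF _] := exact_ext_aug exF.
split; [ | exact: projE | | exact: cone_top_mono | ].
- case=> [|j] lejr; first exact: projF.
  exact: biprod_projective (bp_biprod _) (projE j (ltnW lejr)) (projF j.+1 lejr).
- by move=> k lekr; split; [apply: cone_diff_comp0 | apply: cone_exact_mid].
destruct r as [|s].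
  move=> P x projP /=; have [a ea] := projP _ _ _ epi_augE (comp (eaug F) x).
  have [|m mx] := exact_at_on_proj HC topF projP (x := x - comp (g 0%N) a).
    by rewrite compmB compA g_aug ea subrr.
  by exists (a + comp (eincl E) m); rewrite compDr compA g_incl mx addrC subrK.
split; [exact: cone_diff_top | | exact: cone_diff0_epi].
move=> P x projP Dx0; have [dEa gac] := cone_cycle exF g_aug (ltnSn s) Dx0.
have [a0 ea0] := exact_at_on_proj HC (midE s (ltnSn s)) projP dEa.
have dFgac : comp (ediff F s) (comp (g s.+1) a0 + comp (bp_pr2 (biprod_of HC _ _)) x) = 0.
  by rewrite compDr compA -(g_diff s (ltnSn s)) -compA ea0.
have [m mx] := exact_at_on_proj HC topF projP dFgac.
exists (- a0 + comp (eincl E) m).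
apply: (biprod_hom_eq (bp_biprod _)); rewrite [in LHS]compA.
  rewrite (biprod_pr1 (bp_biprod _)) compNm compDr compmN compA (proj1 topE).
  by rewrite comp0m addr0 opprK ea0.
by rewrite (biprod_pr2 (bp_biprod _)) compDr compmN compA g_incl mx addKr.
Qed.

Lemma ext_mor_parity_iso (C : precat) (HC : abelian C) (N M : C) r (E F : ext N M r) :
  exact_ext E -> exact_ext F -> proj_ext E -> proj_ext F -> ext_mor E F ->
  is_iso (bigsum HC (evens (eobj E) r ++ odds (eobj F) r))
         (bigsum HC (odds (eobj E) r ++ evens (eobj F) r)).
Proof.
move=> exE exF projE projF [g [g_aug g_incl g_diff]].
have cone_exact := cone_proj_exact HC exE exF projE projF g_aug g_incl g_diff.
pose Y k := if k == r.+1 then eobj E r else cone_obj HC E F k.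
have YE k : (k <= r)%N -> Y k = cone_obj HC E F k by move=> lekr; rewrite /Y ltn_eqF.
have Ytop : Y r.+1 = eobj E r by rewrite /Y eqxx.
have := proj_exact_complex_parity HC cone_exact YE Ytop.
rewrite evensS oddsS => isoY.
have [isoEv isoOd] := bigsum_parity_interleave (G := fun k => Y k.+1) (P := eobj E)
  (Q := eobj F) (fun k ltkr => YE k.+1 ltkr) Ytop.
apply: iso_trans (iso_sym isoEv) _; apply: iso_trans (iso_sym isoY) _.
exact: isoOd.
Qed.

Section Correction.
Variables (C : precat) (N M : C) (r : nat) (E F : ext N M r).
Variable h : Hom (eobj E r) M.

(* [eincl F \o h] placed in degree [r], zero in every other degree. *)
Definition top_correction (i : nat) : Hom (eobj E i) (eobj F i) :=
  if r =P i is ReflectT e then ecast j (Hom (eobj E j) (eobj F j)) e (comp (eincl F) h)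
  else 0.

Lemma top_correction_top : top_correction r = comp (eincl F) h.
Proof. by rewrite /top_correction; case: eqP => // e; rewrite eq_axiomK. Qed.

Lemma top_correction_lt i : (i < r)%N -> top_correction i = 0.
Proof. by move=> ltir; rewrite /top_correction; case: eqP => // e; rewrite e ltnn in ltir. Qed.

Lemma adiff_top_correction i : exact_ext F -> comp (adiff F i) (top_correction i) = 0.
Proof.
move=> /exact_ext_aug [_ _ topF _]; rewrite /top_correction.
case: eqP => [e|_]; last exact: compm0.
by case: i / e; rewrite compA (proj1 topF) comp0m.
Qed.

End Correction.

Lemma comparison_trivial_ext_mor (C : precat) (HC : abelian C) (N M : C) r
    (E F : ext N M r) :
  exact_ext E -> exact_ext F -> proj_ext E -> comparison_trivial E F -> ext_mor E F.
Proof.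
move=> exE exF projE trivEF.
have chain_f := comparison_chain HC exE exF projE.
have [al fal] := chain_map_on_M HC exE exF chain_f.
have [h hE] := trivEF _ chain_f erefl al fal.
exists (fun i => comparison E F i.+1 - top_correction F h i); split.
- rewrite compmB (adiff_top_correction h 0 exF) subr0.
  by rewrite -[eaug F]/(adiff F 0) -chain_f // comp1m.
- rewrite compBm top_correction_top fal -compA -compmB -hE opprB addrC subrK.
  exact: compm1.
- move=> i ltir; rewrite compBm compmB top_correction_lt // comp0m subr0.
  by rewrite (adiff_top_correction h i.+1 exF) subr0 (chain_f i.+1 ltir).
Qed.

Theorem lemmaA2 (C : precat) (HC : abelian C) (N M : C) (r : nat)
  (E F : ext N M r) (HE : exact_ext E) (HF : exact_ext F)
  (HEF : yoneda_equiv E F)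
  (HP : forall i, (i <= r)%N -> projective (eobj E i))
  (HQ : forall i, (i <= r)%N -> projective (eobj F i)) :
  forall S T : C,
    is_biprod_seq ([seq eobj E i | i <- iota 0 r.+1 & ~~ odd i]
                   ++ [seq eobj F i | i <- iota 0 r.+1 & odd i]) S ->
    is_biprod_seq ([seq eobj E i | i <- iota 0 r.+1 & odd i]
                   ++ [seq eobj F i | i <- iota 0 r.+1 & ~~ odd i]) T ->
    is_iso S T.
Proof.
move=> S T bpS bpT.
have [_ trivE_F] := proj1 (comparison_trivial_yoneda HC HE HP HEF) HE.
have morEF := comparison_trivial_ext_mor HC HE HF HP
  (trivE_F (comparison_trivial_refl HC HE HP)).
apply: iso_trans (biprod_seq_bigsum HC bpS) _.
apply: iso_trans (ext_mor_parity_iso HC HE HF HP HQ morEF) _.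
exact: iso_sym (biprod_seq_bigsum HC bpT).
Qed.
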